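(* For every $x\in\Gamma$ and $t\in\Gamma'_x$, the function $P_{x,t}$ defined below is a polynomial with real coefficients and positive leading coefficient. For every nonreal $z$ there is a nonzero function $v:\Gamma\to\mathbb C$ with $Jv=zv$ on all of $\Gamma$ and $v(t)=P_{x,t}(z)$ for all $t\in\Gamma'_x$. Moreover, if $y\in\Gamma_x$ and $t\in\Gamma'_y$ (so $\Gamma'_y\subset\Gamma'_x$), then $P_{y,t}$ divides $P_{x,t}$.
   Context: Let $\Gamma$ be an infinite connected tree whose vertices are arranged in levels $\ell(x)\in\{0,1,2,\dots\}$: every vertex $x$ is adjacent to exactly one vertex $x'$ with $\ell(x')=\ell(x)+1$; for $\ell(x)\ge 1$ the set $N_x=\{y:\ y'=x\}$ of neighbours of $x$ on level $\ell(x)-1$ is finite and nonempty; $N_x=\emptyset$ if $\ell(x)=0$; there are no other edges. For $x\in\Gamma$, $\Gamma_x$ is the finite subtree consisting of $x$ and all its descendants, and $\Gamma'_x=\Gamma_x\cup\{x'\}$. Fix $\lambda_x>0$, $\beta_x\in\mathbb R$. The Jacobi matrix $J$ acts on functions $v:\Gamma\to\mathbb C$ by $(Jv)(x)=\lambda_x v(x')+\beta_x v(x)+\sum_{y\in N_x}\lambda_y v(y)$. The functions $P_{x,t}$ ($x\in\Gamma$, $t\in\Gamma'_x$) of the variable $z$ are defined recursively on $\ell(x)$: if $\ell(x)=0$, $P_{x,x}=1$ and $P_{x,x'}(z)=(z-\beta_x)/\lambda_x$. If $\ell(x)\ge1$: $P_{x,x}$ is the monic least common multiple of the polynomials $\{P_{y,x}:\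 y\in N_x\}$; for $y\in N_x$ and $t\in\Gamma_y$, $P_{x,t}=P_{x,x}P_{y,t}/P_{y,x}$; and $P_{x,x'}=\lambda_x^{-1}\big((z-\beta_x)P_{x,x}-\sum_{y\in N_x}\lambda_yP_{x,y}\big)$. *)

From HB Require Import structures.
From mathcomp Require Import all_boot all_order all_algebra.
Set Implicit Arguments. Unset Strict Implicit. Unset Printing Implicit Defensive.
Import Order.TTheory GRing.Theory Num.Theory.
Local Open Scope ring_scope.

Section JacobiTree.
Variables (C : numClosedFieldType) (V : eqType).
(* par x = x' (the neighbour one level up); lev = level; ch x = N_x (as a
   duplicate-free list); lam, bet = the coefficients lambda, beta. *)
Variables (par : V -> V) (lev : V -> nat) (ch : V -> seq V)
          (lam bet : V -> C).

(* t \in Gamma_x  (t is x or a descendant of x) *)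
Definition in_sub (x t : V) : bool :=
  (lev t <= lev x)%N && (iter (lev x - lev t) par t == x).

Definition in_sub' (x t : V) : bool := in_sub x t || (t == par x).

Definition lcmp (p q : {poly C}) : {poly C} := (p * q) %/ gcdp p q.

Definition monicize (p : {poly C}) : {poly C} := (lead_coef p)^-1 *: p.

Definition mlcm (s : seq {poly C}) : {poly C} := monicize (foldr lcmp 1 s).

(* Pr n x t = P_{x,t}, computed for a vertex x of level n
   (values for t outside Gamma'_x are irrelevant and set to 0). *)
Fixpoint Pr (n : nat) (x t : V) : {poly C} :=
  match n with
  | 0 =>
      if t == x then 1
      else if t == par x then (lam x)^-1 *: ('X - (bet x)%:P)
      else 0
  | n'.+1 =>
      let Pxx := mlcm [seq Pr n' y x | y <- ch x] in
      if t == x then Pxx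
      else if t == par x then
        (lam x)^-1 *: (('X - (bet x)%:P) * Pxx
           - \sum_(y <- ch x) lam y *: ((Pxx * Pr n' y y) %/ Pr n' y x))
      else if in_sub x t then
        (* the child y of x with t \in Gamma_y *)
        let y := iter (lev x - lev t).-1 par t in
        (Pxx * Pr n' y t) %/ Pr n' y x
      else 0
  end.

Definition P (x t : V) : {poly C} := Pr (lev x) x t.

Definition Jop (v : V -> C) (u : V) : C :=
  lam u * v (par u) + bet u * v u + \sum_(y <- ch u) lam y * v y.

End JacobiTree.

(* Each P_{x,t} with t below the child y of x equals (P_{x,x} / P_{y,x}) P_{y,t},
   so every claim propagates up the tree by induction on the level.  Real
   coefficients come from invariance under complex conjugation; positivity of
   leading coefficients from lead P_{x,x'} = 1/lam_x and lead (P_{x,x} / P_{y,x}) = lam_y.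
   For nonreal z the Weyl function m_x = lam_x P_{x,x'}(z) / P_{x,x}(z) satisfies
   m_x = z - bet_x - sum_y lam_y^2 / m_y, whence Im m_x / Im z >= 1; so no P_{y,x}
   vanishes at z, and neither does their lcm P_{x,x}.  The values P_{x,.}(z) solve
   Jv = zv on Gamma_x, and the ratios P_{w,t}(z) / P_{w,x}(z) do not depend on the
   ancestor w, which glues these local solutions into a global eigenvector. *)

From Pilot Require Import Defs.
From HB Require Import structures.
From mathcomp Require Import all_boot all_order all_algebra zify ring.
Import Order.TTheory GRing.Theory Num.Theory.
Local Open Scope ring_scope.
Set Implicit Arguments. Unset Strict Implicit. Unset Printing Implicit Defensive.

Section Poly.
Variable C : numClosedFieldType.
Implicit Types (p q : {poly C}) (s : seq {poly C}).
Local Notation conjp p := (map_poly (@Num.Def.conjC C) p).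
Local Notation lcm_seq s := (foldr (@lcmp C) 1 s).

Lemma polyOver_real_conjp p : conjp p = p -> p \is a polyOver Num.real.
Proof. by move=> pR; apply/polyOverP => i; apply/CrealP; rewrite -coef_map pR. Qed.

Lemma lcmpE p q : lcmp p q = p * (q %/ gcdp p q).
Proof. by rewrite /lcmp divp_mulA // dvdp_gcdr. Qed.

Lemma dvdp_lcmpl p q : p %| lcmp p q.
Proof. by rewrite lcmpE dvdp_mulr. Qed.

Lemma dvdp_lcmpr p q : q %| lcmp p q.
Proof. by rewrite /lcmp -divp_mulAC ?dvdp_gcdl // dvdp_mull. Qed.

Lemma lcmp_neq0 p q : p != 0 -> q != 0 -> lcmp p q != 0.
Proof.
move=> p0 q0; rewrite lcmpE mulf_neq0 //.
by apply: contra q0 => /eqP h; rewrite -(divpK (dvdp_gcdr p q)) h mul0r.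
Qed.

Lemma root_lcmp p q z : root (lcmp p q) z -> root p z || root q z.
Proof.
rewrite lcmpE rootM => /orP [->//|h]; apply/orP; right.
by rewrite -(divpK (dvdp_gcdr p q)) rootM h.
Qed.

Lemma conjp_lcmp p q : conjp (lcmp p q) = lcmp (conjp p) (conjp q).
Proof. by rewrite /lcmp map_divp rmorphM gcdp_map. Qed.

Lemma lcm_seq_neq0 s : 0 \notin s -> lcm_seq s != 0.
Proof.
elim: s => [|p s IH] /=; first by rewrite oner_neq0.
by rewrite in_cons negb_or eq_sym => /andP [p0 /IH]; apply: lcmp_neq0.
Qed.

Lemma dvdp_lcm_seq s p : p \in s -> p %| lcm_seq s.
Proof.
elim: s => [|q s IH] //=; rewrite in_cons => /orP [/eqP ->|/IH h].
  exact: dvdp_lcmpl.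
exact: dvdp_trans h (dvdp_lcmpr _ _).
Qed.

Lemma root_lcm_seq s z : root (lcm_seq s) z -> has (root^~ z) s.
Proof.
elim: s => [|p s IH] /=; first by rewrite rootC oner_eq0.
by move/root_lcmp => /orP [->//|/IH ->]; rewrite orbT.
Qed.

Lemma conjp_lcm_seq s : {in s, forall p, conjp p = p} -> conjp (lcm_seq s) = lcm_seq s.
Proof.
elim: s => [|p s IH] sR /=; first exact: rmorph1.
rewrite conjp_lcmp sR ?mem_head // IH // => q qs.
by apply: sR; rewrite in_cons qs orbT.
Qed.

Lemma mlcm_nil : mlcm [::] = 1 :> {poly C}.
Proof. by rewrite /mlcm /monicize /= lead_coef1 invr1 scale1r. Qed.

Lemma mlcm_monic s : 0 \notin s -> mlcm s \is monic.
Proof.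
move=> s0; apply/monicP; rewrite /mlcm /monicize lead_coefZ mulVf //.
by rewrite lead_coef_eq0 lcm_seq_neq0.
Qed.

Lemma dvdp_mlcm s p : p \in s -> p %| mlcm s.
Proof.
move=> ps; rewrite /mlcm /monicize; set q := foldr _ _ _.
have [->|q0] := eqVneq q 0; first by rewrite scaler0 dvdp0.
by rewrite dvdpZr ?invr_eq0 ?lead_coef_eq0 // dvdp_lcm_seq.
Qed.

Lemma root_mlcm s z : root (mlcm s) z -> has (root^~ z) s.
Proof.
rewrite /mlcm /monicize rootE hornerZ mulf_eq0 invr_eq0 lead_coef_eq0.
by case/orP => [/eqP q0|r]; apply: root_lcm_seq; rewrite ?q0 ?root0.
Qed.

Lemma conjp_mlcm s : {in s, forall p, conjp p = p} -> conjp (mlcm s) = mlcm s.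
Proof.
move=> /conjp_lcm_seq sR.
by rewrite /mlcm /monicize map_polyZ fmorphV -lead_coef_map sR.
Qed.

End Poly.

Section ImRatio.
Variable C : numClosedFieldType.
Implicit Types z b g : C.

(* [Im g / Im z], stated without real and imaginary parts. *)
Definition im_ratio z g := (g - g^*) / (z - z^*).

Lemma im_ratio_recE (I : eqType) (r : seq I) z b (l g : I -> C) :
  z \notin Num.real -> b^* = b -> {in r, forall i, (l i)^* = l i /\ g i != 0} ->
  im_ratio z (z - b - \sum_(i <- r) l i ^+ 2 / g i)
  = 1 + \sum_(i <- r) l i ^+ 2 / (g i * (g i)^*) * im_ratio z (g i).
Proof.
move=> zNR bR lgr; have z_neq : z - z^* != 0 by rewrite subr_eq0 eq_sym -CrealE.
rewrite /im_ratio !rmorphB /= rmorph_sum /= bR.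
have -> : z - b - \sum_(i <- r) l i ^+ 2 / g i - (z^* - b - \sum_(i <- r) (l i ^+ 2 / g i)^*)
    = (z - z^*) + \sum_(i <- r) - (l i ^+ 2 / g i - (l i ^+ 2 / g i)^*).
  by rewrite sumrN sumrB; ring.
rewrite mulrDl mulfV // mulr_suml; congr (_ + _); rewrite !big_seq.
apply: eq_bigr => i ir; have [li gi] := lgr i ir.
have gi' : (g i)^* != 0 by rewrite conjC_eq0.
by rewrite rmorphM /= fmorphV /= rmorphXn /= li; field; rewrite z_neq gi gi'.
Qed.

Lemma im_ratio_rec_gt0 (I : eqType) (r : seq I) z b (l g : I -> C) :
  z \notin Num.real -> b^* = b -> {in r, forall i, 0 < l i /\ 0 < im_ratio z (g i)} ->
  0 < im_ratio z (z - b - \sum_(i <- r) l i ^+ 2 / g i).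
Proof.
move=> zNR bR lgr; have g_neq0 i : i \in r -> g i != 0.
  move=> ir; have [_] := lgr i ir; apply: contraTneq => ->.
  by rewrite /im_ratio rmorph0 subr0 mul0r ltxx.
rewrite im_ratio_recE // => [|i ir]; last first.
  by have [/gtr0_real/CrealP li _] := lgr i ir; rewrite li g_neq0.
rewrite addrC ltr_wpDl ?ltr01 // big_seq sumr_ge0 // => i ir.
have [li gi] := lgr i ir.
by rewrite ltW // mulr_gt0 // divr_gt0 ?exprn_gt0 // mul_conjC_gt0 g_neq0.
Qed.

End ImRatio.

Section JacobiTree.
Variables (C : numClosedFieldType) (V : eqType)
  (par : V -> V) (lev : V -> nat) (ch : V -> seq V) (lam bet : V -> C).
Hypotheses (Hlev : forall x, lev (par x) = (lev x).+1)
  (Hch : forall x y, (y \in ch x) = (par y == x))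
  (Hch0 : forall x, (ch x == [::]) = (lev x == 0%N))
  (Hconn : forall x y, exists m n, iter m par x = iter n par y)
  (Hlam : forall x, 0 < lam x)
  (Hbet : forall x, bet x \is Num.real).

Local Notation sub := (in_sub par lev).
Local Notation sub' := (in_sub' par lev).
Local Notation P := (Defs.P par lev ch lam bet).
Local Notation Jop := (Jop par ch lam bet).
Local Notation conjp p := (map_poly (@Num.Def.conjC C) p).

Lemma lev_iter k t : lev (iter k par t) = (lev t + k)%N.
Proof. by elim: k => [|k IH]; rewrite ?addn0 // iterS Hlev IH addnS. Qed.

Lemma in_subP x t : reflect (exists k, iter k par t = x) (sub x t).
Proof.
apply: (iffP andP) => [[_ /eqP h]|[k <-]]; first by exists (lev x - lev t)%N.
by rewrite lev_iter leq_addr addKn eqxx.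
Qed.

Lemma in_sub_iter k t : sub (iter k par t) t.
Proof. by apply/in_subP; exists k. Qed.

Lemma in_sub_refl x : sub x x.
Proof. exact: (in_sub_iter 0). Qed.

Lemma in_sub_trans x y t : sub x y -> sub y t -> sub x t.
Proof.
move=> /in_subP [m <-] /in_subP [n <-].
by apply/in_subP; exists (m + n)%N; rewrite iterD.
Qed.

Lemma par_ch x y : y \in ch x -> par y = x.
Proof. by rewrite Hch => /eqP. Qed.

Lemma lev_ch x y : y \in ch x -> lev x = (lev y).+1.
Proof. by move/par_ch <-. Qed.

Lemma in_sub_ch x y : y \in ch x -> sub x y.
Proof. by move/par_ch <-; apply: (in_sub_iter 1). Qed.

Lemma in_sub_child x t : sub x t -> t != x -> exists2 y, y \in ch x & sub y t.
Proof.
move=> /in_subP [[|k] <-]; rewrite ?eqxx // => _.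
by exists (iter k par t); rewrite ?in_sub_iter // Hch.
Qed.

Lemma in_sub_par x t : sub x t -> t != x -> sub x (par t).
Proof. by move=> /in_subP [[|k] <-]; rewrite ?eqxx // iterSr in_sub_iter. Qed.

Lemma in_sub_neq_par x t : sub x t -> t != par x.
Proof. by case/andP => le_tx _; apply: contraTneq le_tx => ->; rewrite Hlev ltnn. Qed.

Lemma in_sub'_trans x y t : sub x y -> sub' y t -> sub' x t.
Proof.
move=> xy /orP [yt|/eqP ->]; first by rewrite /in_sub' (in_sub_trans xy yt).
have [<-|ne] := eqVneq y x; first by rewrite /in_sub' eqxx orbT.
by rewrite /in_sub' in_sub_par.
Qed.

Lemma lev_ind (Q : V -> Prop) :
  (forall x, (forall y, y \in ch x -> Q y) -> Q x) -> forall x, Q x.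
Proof.
move=> IH; suff Qlt n x : (lev x < n)%N -> Q x by move=> x; apply: (Qlt _ x (ltnSn _)).
elim: n x => [//|n IHn] x lt_xn; apply: IH => y /lev_ch ey; apply: IHn; lia.
Qed.

Lemma P_self x : P x x = mlcm [seq P y x | y <- ch x].
Proof.
rewrite /Defs.P; case e: (lev x) => [|n] /=; rewrite eqxx.
  by move/eqP: e; rewrite -Hch0 => /eqP ->; rewrite mlcm_nil.
by congr mlcm; apply/eq_in_map => y /lev_ch; rewrite e => -[->].
Qed.

Lemma P_child x y t : y \in ch x -> sub y t -> P x t = (P x x * P y t) %/ P y x.
Proof.
move=> yx yt; have xt := in_sub_trans (in_sub_ch yx) yt.
have tx : t != x by apply: contraTneq (in_sub_neq_par yt) => ->; rewrite (par_ch yx) eqxx.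
have [k ek] := in_subP _ _ yt.
have ey : iter (lev x - lev t).-1 par t = y.
  by rewrite (lev_ch yx) -ek lev_iter; have -> : ((lev t + k).+1 - lev t).-1 = k by lia.
by rewrite {1 2}/Defs.P (lev_ch yx) /= (negbTE tx) (negbTE (in_sub_neq_par xt)) xt ey eqxx.
Qed.

Lemma P_par x : P x (par x) = (lam x)^-1 *:
  (('X - (bet x)%:P) * P x x - \sum_(y <- ch x) lam y *: P x y).
Proof.
have par_neq : par x != x by apply/eqP => e; have := Hlev x; rewrite e; lia.
case e: (lev x) => [|n].
  move/eqP: (e); rewrite -Hch0 => /eqP chx.
  by rewrite /Defs.P e /= (negbTE par_neq) eqxx chx big_nil eqxx mulr1 subr0.
rewrite {1}/Defs.P e /= (negbTE par_neq) eqxx.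
have -> : mlcm [seq Pr par lev ch lam bet n y x | y <- ch x] = P x x.
  by rewrite P_self; congr mlcm; apply/eq_in_map => y /lev_ch; rewrite e => -[->].
congr (_ *: (_ - _)); rewrite !big_seq; apply: eq_bigr => y yx.
by rewrite (P_child yx (in_sub_refl y)); have := lev_ch yx; rewrite e => -[->].
Qed.

Lemma dvdp_P_child x y : y \in ch x -> P y x %| P x x.
Proof. by move=> yx; rewrite P_self dvdp_mlcm //; apply: map_f. Qed.

Lemma P_factor x y t : y \in ch x -> sub' y t -> P x t = (P x x %/ P y x) * P y t.
Proof.
move=> yx /orP [yt|/eqP ->]; last by rewrite (par_ch yx) divpK // dvdp_P_child.
by rewrite (P_child yx yt) divp_mulAC // dvdp_P_child.
Qed.

Lemma in_sub_in_sub' x t : sub x t -> sub' x t.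
Proof. by move=> xt; rewrite /in_sub' xt. Qed.

Lemma in_sub'_self x : sub' x x.
Proof. exact/in_sub_in_sub'/in_sub_refl. Qed.

Lemma in_sub'_par x : sub' x (par x).
Proof. by rewrite /in_sub' eqxx orbT. Qed.

Lemma lam_neq0 x : lam x != 0.
Proof. by rewrite gt_eqF. Qed.

Lemma P_degree x : [/\ P x x \is monic, lead_coef (P x (par x)) = (lam x)^-1
  & size (P x (par x)) = (size (P x x)).+1].
Proof.
elim/lev_ind: x => x IH.
have Pyx_neq0 y : y \in ch x -> P y x != 0.
  move=> yx; have [_ lead_yx _] := IH y yx.
  by rewrite -lead_coef_eq0 -(par_ch yx) lead_yx invr_eq0 lam_neq0.
have Pxx_monic : P x x \is monic.
  rewrite P_self mlcm_monic //; apply/mapP => -[y yx /eqP].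
  by rewrite eq_sym (negbTE (Pyx_neq0 y yx)).
have size_Pxy y : y \in ch x -> (size (P x y) < size (P x x))%N.
  move=> yx; have [Pyy_monic _ size_yx] := IH y yx.
  have Pxx_dec := divpK (dvdp_P_child yx).
  rewrite (par_ch yx) in size_yx.
  have Pyy_gt0 := monic_neq0 Pyy_monic; rewrite -size_poly_gt0 in Pyy_gt0.
  have q_neq0 : P x x %/ P y x != 0.
    by apply: contra (monic_neq0 Pxx_monic) => /eqP q0; rewrite -Pxx_dec q0 mul0r.
  rewrite (P_factor yx (in_sub'_self y)) -{2}Pxx_dec.
  rewrite !size_mul ?q_neq0 ?Pyx_neq0 ?(monic_neq0 Pyy_monic) // size_yx.
  by rewrite addnS /= ltn_predL addn_gt0 Pyy_gt0 orbT.
have size_S : (size (\sum_(y <- ch x) lam y *: P x y)%R < size (P x x))%N.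
  rewrite big_seq; apply: (big_ind (fun p : {poly C} => size p < size (P x x))%N).
  - by rewrite size_poly0 size_poly_gt0 monic_neq0.
  - by move=> p q hp hq; rewrite (leq_ltn_trans (size_polyD _ _)) // gtn_max hp hq.
  - by move=> y yx; rewrite (leq_ltn_trans (size_scale_leq _ _)) ?size_Pxy.
have size_XPxx : size (('X - (bet x)%:P) * P x x) = (size (P x x)).+1.
  by rewrite size_mul ?polyXsubC_eq0 ?monic_neq0 // size_XsubC.
have size_NS : (size (- \sum_(y <- ch x) lam y *: P x y)%R < size (('X - (bet x)%:P) * P x x)%R)%N.
  by rewrite size_polyN size_XPxx ltnS ltnW.
rewrite P_par; split => //.
- by rewrite lead_coefZ lead_coefDl // lead_coefM lead_coefXsubC (monicP Pxx_monic) !mulr1.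
- by rewrite size_scale ?invr_eq0 ?lam_neq0 // size_polyDl.
Qed.

Lemma P_self_monic x : P x x \is monic.
Proof. by case: (P_degree x). Qed.

Lemma lead_coef_P_par x : lead_coef (P x (par x)) = (lam x)^-1.
Proof. by case: (P_degree x). Qed.

Lemma lead_coef_P_child x y : y \in ch x -> lead_coef (P y x) = (lam y)^-1.
Proof. by move/par_ch <-; apply: lead_coef_P_par. Qed.

Lemma lead_coef_P_quot x y : y \in ch x -> lead_coef (P x x %/ P y x) = lam y.
Proof.
move=> yx; have := congr1 lead_coef (divpK (dvdp_P_child yx)).
rewrite lead_coefM (lead_coef_P_child yx) (monicP (P_self_monic x)).
by move/(congr1 ( *%R^~ (lam y))); rewrite -mulrA mulVf ?lam_neq0 // mulr1 mul1r.
Qed.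

Lemma conj_lam x : (lam x)^* = lam x.
Proof. exact/CrealP/gtr0_real. Qed.

Lemma conj_bet x : (bet x)^* = bet x.
Proof. exact/CrealP. Qed.

Lemma P_conj x : conjp (P x x) = P x x /\ conjp (P x (par x)) = P x (par x).
Proof.
elim/lev_ind: x => x IH.
have Pxx_conj : conjp (P x x) = P x x.
  rewrite P_self conjp_mlcm // => _ /mapP [y yx ->].
  by have [_] := IH y yx; rewrite (par_ch yx).
split=> //; rewrite P_par map_polyZ fmorphV /= conj_lam rmorphB rmorphM /= Pxx_conj.
rewrite map_polyXsubC /= conj_bet rmorph_sum; congr (_ *: (_ - _)).
rewrite !big_seq; apply: eq_bigr => y yx.
have [Pyy_conj Pyx_conj] := IH y yx; rewrite (par_ch yx) in Pyx_conj.
rewrite /= map_polyZ /= conj_lam (P_factor yx (in_sub'_self y)) rmorphM /= map_divp.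
by rewrite Pxx_conj Pyx_conj Pyy_conj.
Qed.

Lemma P_real_lead x t : sub' x t -> conjp (P x t) = P x t /\ 0 < lead_coef (P x t).
Proof.
elim/lev_ind: x t => x IH t /orP [xt|/eqP ->]; last first.
  by have [_ ->] := P_conj x; rewrite lead_coef_P_par invr_gt0.
have [-> | tx] := eqVneq t x.
  by have [-> _] := P_conj x; rewrite (monicP (P_self_monic x)) ltr01.
have [y yx yt] := in_sub_child xt tx.
have [Pyt_conj Pyt_lead] := IH y yx t (in_sub_in_sub' yt).
have [Pxx_conj _] := P_conj x; have [_ Pyx_conj] := P_conj y.
rewrite (par_ch yx) in Pyx_conj.
rewrite (P_factor yx (in_sub_in_sub' yt)) rmorphM /= map_divp Pxx_conj Pyx_conj Pyt_conj.
by rewrite lead_coefM (lead_coef_P_quot yx) mulr_gt0.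
Qed.

Lemma dvdp_P x y t : sub x y -> sub' y t -> P y t %| P x t.
Proof.
elim/lev_ind: x y t => x IH y t xy yt.
have [-> | yx] := eqVneq y x; first exact: dvdpp.
have [c cx cy] := in_sub_child xy yx.
by rewrite (P_factor cx (in_sub'_trans cy yt)) dvdp_mull // IH.
Qed.

Lemma Jop_scale (v w : V -> C) c u :
  v (par u) = c * w (par u) -> v u = c * w u ->
  {in ch u, forall y, v y = c * w y} -> Jop v u = c * Jop w u.
Proof.
move=> vp vu vch; rewrite /Defs.Jop vp vu big_seq.
rewrite (eq_bigr (fun y => c * (lam y * w y))) => [|y yu]; last by rewrite vch // mulrCA.
by rewrite -big_seq -mulr_sumr; ring.
Qed.

Lemma Jop_P x z u : sub x u -> Jop (fun t => (P x t).[z]) u = z * (P x u).[z].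
Proof.
elim/lev_ind: x u => x IH u xu.
have [-> | ux] := eqVneq u x.
  rewrite /Defs.Jop P_par hornerZ mulrA mulfV ?lam_neq0 // mul1r.
  rewrite hornerD hornerN hornerM hornerXsubC horner_sum.
  under eq_bigr do rewrite hornerZ.
  ring.
have [y yx yu] := in_sub_child xu ux.
have P_factor_z t : sub' y t -> (P x t).[z] = (P x x %/ P y x).[z] * (P y t).[z].
  by move=> yt; rewrite (P_factor yx yt) hornerM.
rewrite (@Jop_scale _ (fun t => (P y t).[z]) (P x x %/ P y x).[z]).
- by rewrite IH // mulrCA -P_factor_z // in_sub_in_sub'.
- by rewrite P_factor_z // (in_sub'_trans yu (in_sub'_par u)).
- by rewrite P_factor_z // in_sub_in_sub'.
- by move=> c cu; rewrite P_factor_z // in_sub_in_sub' // (in_sub_trans yu (in_sub_ch cu)).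
Qed.

Definition weyl x z := lam x * (P x (par x)).[z] / (P x x).[z].

Lemma weyl_rec x z : (P x x).[z] != 0 -> {in ch x, forall y, (P y x).[z] != 0} ->
  weyl x z = z - bet x - \sum_(y <- ch x) lam y ^+ 2 / weyl y z.
Proof.
move=> Pxx_z Pyx_z; rewrite /weyl P_par hornerZ mulrA mulfV ?lam_neq0 // mul1r.
rewrite hornerD hornerN hornerM hornerXsubC horner_sum mulrBl mulfK // mulr_suml.
congr (_ - _); rewrite !big_seq; apply: eq_bigr => y yx.
have quot_z : (P x x %/ P y x).[z] = (P x x).[z] / (P y x).[z].
  by rewrite -{2}(divpK (dvdp_P_child yx)) hornerM mulfK ?Pyx_z.
rewrite hornerZ (P_factor yx (in_sub'_self y)) hornerM quot_z (par_ch yx) invf_div.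
by field; rewrite Pxx_z Pyx_z ?lam_neq0.
Qed.

Lemma weyl_im_gt0 x z : z \notin Num.real ->
  (P x x).[z] != 0 /\ 0 < im_ratio z (weyl x z).
Proof.
move=> zNR; elim/lev_ind: x => x IH.
have Pyx_z y : y \in ch x -> (P y x).[z] != 0.
  move=> yx; have [_] := IH y yx; apply: contraTneq => Pyx0.
  by rewrite /weyl (par_ch yx) Pyx0 mulr0 mul0r /im_ratio rmorph0 subr0 mul0r ltxx.
have Pxx_z : ~~ root (P x x) z.
  rewrite P_self; apply/negP => /root_mlcm /hasP [_ /mapP [y yx ->]].
  exact/negP/Pyx_z.
split=> //; rewrite weyl_rec //; apply: (im_ratio_rec_gt0 zNR (conj_bet x)) => y yx.
by have [_ ?] := IH y yx; split.
Qed.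

Lemma P_quot_eval_neq0 x y z : z \notin Num.real -> y \in ch x ->
  (P x x %/ P y x).[z] != 0.
Proof.
move=> zNR yx; have [Pxx_z _] := weyl_im_gt0 x zNR.
by apply: contraNneq Pxx_z => q_z; rewrite -(divpK (dvdp_P_child yx)) hornerM q_z mul0r.
Qed.

Lemma P_eval_ratio w y t s z : z \notin Num.real -> sub w y -> sub' y t -> sub' y s ->
  (P w t).[z] / (P w s).[z] = (P y t).[z] / (P y s).[z].
Proof.
move=> zNR; elim/lev_ind: w y => w IH y wy yt ys.
have [-> //| yw] := eqVneq y w.
have [c cw cy] := in_sub_child wy yw.
rewrite (P_factor cw (in_sub'_trans cy yt)) (P_factor cw (in_sub'_trans cy ys)).
by rewrite !hornerM invfM mulrACA mulfV ?P_quot_eval_neq0 // mul1r (IH c cw y cy yt ys).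
Qed.

Lemma in_sub_ancestor x t : exists k, sub (iter k par x) t.
Proof. by have [m [n e]] := Hconn x t; exists m; rewrite e in_sub_iter. Qed.

Lemma in_sub_iter_leq x m n : (m <= n)%N -> sub (iter n par x) (iter m par x).
Proof. by move=> le_mn; rewrite -(subnK le_mn) iterD in_sub_iter. Qed.

Lemma eigenvector x z : z \notin Num.real ->
  exists v : V -> C, (exists u, v u != 0) /\ (forall u, Jop v u = z * v u)
    /\ (forall t, sub' x t -> v t = (P x t).[z]).
Proof.
move=> zNR; pose a k := iter k par x.
pose k t := xchoose (in_sub_ancestor x t).
(* By [P_eval_ratio], any ancestor [a j] of t may replace [a (k t)] here. *)
pose v t := (P x x).[z] / (P (a (k t)) x).[z] * (P (a (k t)) t).[z].
have vE j t : sub (a j) t -> v t = (P x x).[z] / (P (a j) x).[z] * (P (a j) t).[z].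
  move=> ajt; rewrite /v mulrAC [RHS]mulrAC -!mulrA; congr (_ * _).
  have ax i : sub' (a i) x := in_sub_in_sub' (in_sub_iter i x).
  have akt := in_sub_in_sub' (xchooseP (in_sub_ancestor x t)).
  rewrite -(P_eval_ratio zNR (in_sub_iter_leq x (leq_maxr j (k t))) akt (ax _)).
  by rewrite (P_eval_ratio zNR (in_sub_iter_leq x (leq_maxl j (k t))) (in_sub_in_sub' ajt) (ax _)).
have [Pxx_z _] := weyl_im_gt0 x zNR.
exists v; split; [|split].
- by exists x; rewrite (vE 0%N x (in_sub_refl x)) mulfVK.
- move=> u; have [j ajp] := in_sub_ancestor x (par u).
  have aju := in_sub_trans ajp (in_sub_iter 1 u).
  rewrite (@Jop_scale _ (fun t => (P (a j) t).[z]) ((P x x).[z] / (P (a j) x).[z])).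
  + by rewrite Jop_P // (vE j) // mulrCA.
  + exact: vE.
  + exact: vE.
  + by move=> c cu; apply: vE; apply: in_sub_trans aju (in_sub_ch cu).
- move=> t /orP [xt|/eqP ->]; first by rewrite (vE 0%N) //= mulfV ?mul1r.
  rewrite (vE 1%N) ?in_sub_refl // mulrC mulrA mulrAC.
  by rewrite (P_eval_ratio zNR (in_sub_iter 1 x) (in_sub'_par x) (in_sub'_self x)) divfK.
Qed.

End JacobiTree.

Theorem proposition1 (C : numClosedFieldType) (V : eqType)
  (par : V -> V) (lev : V -> nat) (ch : V -> seq V) (lam bet : V -> C)
  (Hlev : forall x, lev (par x) = (lev x).+1)
  (Hch_uniq : forall x, uniq (ch x))
  (Hch : forall x y, (y \in ch x) = (par y == x))
  (Hch0 : forall x, (ch x == [::]) = (lev x == 0%N))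
  (Hconn : forall x y, exists m n, iter m par x = iter n par y)
  (Hlam : forall x, 0 < lam x)
  (Hbet : forall x, bet x \is Num.real) :
  forall x : V,
    (forall t, in_sub' par lev x t ->
       P par lev ch lam bet x t \is a polyOver Num.real
       /\ 0 < lead_coef (P par lev ch lam bet x t))
    /\ (forall z : C, z \notin Num.real ->
         exists v : V -> C,
           (exists u, v u != 0)
           /\ (forall u, Jop par ch lam bet v u = z * v u)
           /\ (forall t, in_sub' par lev x t -> v t = (P par lev ch lam bet x t).[z]))
    /\ (forall y t, in_sub par lev x y -> in_sub' par lev y t ->
         P par lev ch lam bet y t %| P par lev ch lam bet x t).
Proof.
move=> x; split; [|split].
- move=> t xt; have [Pxt_conj Pxt_lead] := P_real_lead Hlev Hch Hch0 Hlam Hbet xt.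
  by rewrite polyOver_real_conjp.
- exact: eigenvector Hlev Hch Hch0 Hconn Hlam Hbet x.
- move=> y t xy yt; exact: (dvdp_P lam bet Hlev Hch Hch0 xy yt).
Qed.
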